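(* Let $X$ be a $T_1$ space in which every open subspace is $C$-embedded (every real-valued continuous function on an open subspace extends to a continuous function on $X$). Then for any two ideals $\mathcal{P},\mathcal{Q}$ of closed subsets of $X$, $C(X)_{\mathcal{P}\vee\mathcal{Q}}=C(X)_\mathcal{P}\vee C(X)_\mathcal{Q}$, where $\mathcal{P}\vee\mathcal{Q}=\{A\cup B\colon A\in\mathcal{P},B\in\mathcal{Q}\}$ and $C(X)_\mathcal{P}\vee C(X)_\mathcal{Q}=\{\sum_{i=1}^m f_ig_i\colon m\in\mathbb{N}, f_i\in C(X)_\mathcal{P}, g_i\in C(X)_\mathcal{Q}\}$.
   Context: An ideal of closed subsets of $X$ is a family $\mathcal{P}$ of closed subsets closed under finite unions and under passing to closed subsets. $D_f$ is the set of discontinuity points of $f\in\mathbb{R}^X$; $C(X)_\mathcal{P}=\{f\in\mathbb{R}^X\colon\overline{D_f}\in\mathcal{P}\}$ with pointwise operations. *)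

From HB Require Import structures.
From mathcomp Require Import all_boot all_order all_algebra.
From mathcomp Require Import all_classical all_reals all_analysis.
Set Implicit Arguments. Unset Strict Implicit. Unset Printing Implicit Defensive.
Import Order.TTheory GRing.Theory Num.Theory numFieldNormedType.Exports.
Local Open Scope classical_set_scope.
Local Open Scope ring_scope.

Definition discont {X : topologicalType} {R : realType} (f : X -> R) : set X :=
  [set x | ~ {for x, continuous f}].

Definition closed_ideal {X : topologicalType} (P : set (set X)) : Prop :=
  [/\ (forall A, P A -> closed A),
      P set0,
      (forall A B, P A -> P B -> P (A `|` B)) &
      (forall A B, P A -> closed B -> B `<=` A -> P B)].

Definition CP {X : topologicalType} (R : realType) (P : set (set X)) : set (X -> R) :=
  [set f | P (closure (discont f))].

Definition ideal_join {X : topologicalType} (P Q : set (set X)) : set (set X) :=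
  [set C | exists2 A, P A & exists2 B, Q B & C = A `|` B].

Definition ring_join {X : Type} {R : realType} (S T : set (X -> R)) : set (X -> R) :=
  [set h | exists m : nat, exists (f g : 'I_m -> X -> R),
     [/\ (forall i, S (f i)), (forall i, T (g i)) &
         h = (fun x => \sum_(i < m) f i x * g i x)]].

Definition open_C_embedded (X : topologicalType) (R : realType) : Prop :=
  forall (U : set X) (g : X -> R), open U -> {within U, continuous g} ->
    exists h : X -> R, continuous h /\ (forall x, U x -> h x = g x).

From mathcomp Require Import all_boot all_order all_algebra.
From mathcomp Require Import all_classical all_reals all_analysis.
Import GRing.Theory numFieldNormedType.Exports.
Local Open Scope classical_set_scope.
Local Open Scope ring_scope.

(* P \/ Q is again an ideal of closed sets, since a closed C inside A `|` B
   splits as (C `&` A) `|` (C `&` B); and C(X)_P is closed under sums and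
   products because D_(f+g) and D_(fg) lie in D_f `|` D_g.  Hence C(X)_(P\/Q)
   is a ring containing C(X)_P and C(X)_Q, which gives one inclusion.
   Conversely, if closure D_h = A `|` B with A in P and B in Q, then h is
   continuous on the open set off closure D_h; extend that restriction to a
   continuous k on X.  Then h - k vanishes off A `|` B, so
   h = k + (h - k) 1_A + (h - k) 1_(B `\` A) with summands in C(X)_P, C(X)_P
   and C(X)_Q respectively. *)

Section ClosedIdeal.
Context {X : topologicalType} {P Q : set (set X)}.
Hypotheses (hP : closed_ideal P) (hQ : closed_ideal Q).

Lemma closed_ideal_join : closed_ideal (ideal_join P Q).
Proof.
case: hP => Pc P0 PU PS; case: hQ => Qc Q0 QU QS; split.
- by move=> _ [A PA [B QB ->]]; apply: closedU; [exact: Pc | exact: Qc].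
- by exists set0 => //; exists set0 => //; rewrite setU0.
- move=> _ _ [A PA [B QB ->]] [A' PA' [B' QB' ->]].
  exists (A `|` A'); first exact: PU.
  exists (B `|` B'); first exact: QU.
  by rewrite setUACA.
- move=> _ C [A PA [B QB ->]] cC CAB.
  exists (C `&` A); first exact: PS PA (closedI cC (Pc _ PA)) (@subIsetr _ _ _).
  exists (C `&` B); first exact: QS QB (closedI cC (Qc _ QB)) (@subIsetr _ _ _).
  by rewrite -setIUr; apply/esym/setIidl.
Qed.

Lemma ideal_joinl : P `<=` ideal_join P Q.
Proof. by move=> A PA; exists A => //; exists set0; [case: hQ | rewrite setU0]. Qed.

Lemma ideal_joinr : Q `<=` ideal_join P Q.
Proof. by move=> B QB; exists set0; [case: hP | exists B => //; rewrite set0U]. Qed.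

End ClosedIdeal.

Section Discontinuity.
Context {R : realType} {X : topologicalType}.
Implicit Types (f g : X -> R) (A : set X).

Lemma discont_continuous f : continuous f -> discont f = set0.
Proof. by move=> cf; apply/seteqP; split => // x /= /(_ (cf x)). Qed.

Lemma continuous_notin_closure_discont f x :
  ~ closure (discont f) x -> {for x, continuous f}.
Proof.
by move=> nDx; apply: contrapT => nc; apply: nDx; exact: subset_closure.
Qed.

Lemma discont_binop (op : R -> R -> R) f g :
  continuous (fun z : R * R => op z.1 z.2) ->
  discont (fun x => op (f x) (g x)) `<=` discont f `|` discont g.
Proof.
move=> cop x /= nc; apply: contrapT => /not_orP[/contrapT cf /contrapT cg].
by apply: nc; apply: continuous2_cvg => //; exact: (cop (f x, g x)).
Qed.

Lemma discont_zero_off A f : closed A ->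
  (forall x, ~ A x -> f x = 0) -> discont f `<=` A.
Proof.
move=> cA f0 x nc; apply: contrapT => nAx; apply: nc.
apply: (@near_cst_continuous _ _ 0).
have : nbhs x (~` A) by apply: open_nbhs_nbhs; split => //; rewrite openC.
by apply: filterS => y /f0.
Qed.

End Discontinuity.

Section FunctionClass.
Context {R : realType} {X : topologicalType} {P : set (set X)}.
Hypothesis hP : closed_ideal P.
Implicit Types (f g : X -> R) (A : set X).

Lemma CPS {P' : set (set X)} : P `<=` P' -> @CP X R P `<=` @CP X R P'.
Proof. by move=> sPP' f; apply: sPP'. Qed.

Lemma CP_closure_sub A f : P A -> closure (discont f) `<=` A -> @CP X R P f.
Proof. by case: hP => _ _ _ PS PA; exact: (PS _ _ PA (@closed_closure _ _)). Qed.

Lemma CP_continuous f : continuous f -> @CP X R P f.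
Proof. by move=> cf; rewrite /CP /= discont_continuous // closure0; case: hP. Qed.

Lemma CP_zero_off A f : P A -> (forall x, ~ A x -> f x = 0) -> @CP X R P f.
Proof.
case: (hP) => Pc _ _ _ PA f0; have cA := Pc _ PA; apply: CP_closure_sub PA _.
rewrite [Z in _ `<=` Z](closure_id A).1 //.
by apply: closureS; exact: discont_zero_off f0.
Qed.

Lemma CP_binop (op : R -> R -> R) f g :
  continuous (fun z : R * R => op z.1 z.2) ->
  @CP X R P f -> @CP X R P g -> @CP X R P (fun x => op (f x) (g x)).
Proof.
case: (hP) => _ _ PU _ cop Pf Pg; apply: CP_closure_sub (PU _ _ Pf Pg) _.
by rewrite -closureU; apply: closureS; exact: discont_binop.
Qed.

Lemma CPD f g : @CP X R P f -> @CP X R P g -> @CP X R P (f + g).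
Proof. exact/CP_binop/add_continuous. Qed.

Lemma CPM f g : @CP X R P f -> @CP X R P g -> @CP X R P (f * g).
Proof. exact/CP_binop/mul_continuous. Qed.

End FunctionClass.

Section RingJoin.
Variables (X : Type) (R : realType) (S T : set (X -> R)).

Lemma ring_join_mul f g : S f -> T g -> ring_join S T (f * g).
Proof.
move=> Sf Tg; exists 1%N, (fun=> f), (fun=> g); split => //.
by apply/funext => x; rewrite big_ord1.
Qed.

Lemma ring_joinD u v :
  ring_join S T u -> ring_join S T v -> ring_join S T (u + v).
Proof.
move=> [m [f [g [Sf Tg ->]]]] [n [f' [g' [Sf' Tg' ->]]]].
pose glue (F : 'I_m -> X -> R) (F' : 'I_n -> X -> R) (i : 'I_(m + n)%N) :=
  match fintype.split i with inl j => F j | inr j => F' j end.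
exists (m + n)%N, (glue f f'), (glue g g'); split.
- by move=> i; rewrite /glue; case: fintype.split.
- by move=> i; rewrite /glue; case: fintype.split.
- have splitl i : fintype.split (lshift n i) = inl i := unsplitK (inl _ i).
  have splitr i : fintype.split (rshift m i) = inr i := unsplitK (inr _ i).
  apply/funext => x; rewrite big_split_ord /glue /=.
  by congr (_ + _); apply: eq_bigr => i _; rewrite ?splitl ?splitr.
Qed.

End RingJoin.

Lemma patch0_setU_setD {T : Type} {V : zmodType} (A B : set T) (d : T -> V) :
  (forall x, ~ (A `|` B) x -> d x = 0) ->
  d = patch (fun=> 0) A d + patch (fun=> 0) (B `\` A) d.
Proof.
move=> d0; apply/funext => x; rewrite addrfctE /patch.
have [Ax|nAx] := pselect (A x).
  by rewrite (mem_set Ax) memNset ?addr0 // => -[].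
have [Bx|nBx] := pselect (B x).
  by rewrite (memNset nAx) (@mem_set _ (B `\` A)) ?add0r.
by rewrite !memNset ?addr0 ?d0 // => -[].
Qed.

Lemma open_C_embedded_extend_discont {R : realType} {X : topologicalType}
    (h : X -> R) : open_C_embedded X R ->
  exists2 k : X -> R, continuous k &
    forall x, ~ closure (discont h) x -> k x = h x.
Proof.
move=> HC; have oU : open (~` closure (discont h)).
  by rewrite openC; exact: closed_closure.
have [|k [kc kh]] := HC _ h oU; last by exists k.
rewrite continuous_open_subspace // => x /set_mem.
exact: continuous_notin_closure_discont.
Qed.

Section IdealJoin.
Context {R : realType} {X : topologicalType} {P Q : set (set X)}.
Hypotheses (hP : closed_ideal P) (hQ : closed_ideal Q).

Lemma ring_join_sub_CP_ideal_join :
  ring_join (@CP X R P) (@CP X R Q) `<=` @CP X R (ideal_join P Q).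
Proof.
have hPQ := closed_ideal_join hP hQ.
move=> _ [m [f [g [Pf Qg ->]]]]; rewrite -fct_sumE.
apply: (big_ind (@CP X R (ideal_join P Q))) => [||i _].
- exact: CP_continuous hPQ _ (@cst_continuous _ _ (0 : R)).
- exact: CPD hPQ.
- apply: (CPM hPQ); first exact: CPS (ideal_joinl hQ) _ (Pf i).
  exact: CPS (ideal_joinr hP) _ (Qg i).
Qed.

Lemma CP_ideal_join_sub_ring_join : open_C_embedded X R ->
  @CP X R (ideal_join P Q) `<=` ring_join (@CP X R P) (@CP X R Q).
Proof.
move=> HC h [A PA [B QB DhE]].
have [k kc kh] := open_C_embedded_extend_discont h HC.
have d0 x : ~ (A `|` B) x -> (h - k) x = 0.
  by rewrite -DhE => /kh kx; rewrite addrfctE opprfctE /= kx subrr.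
have -> : h = k * 1 + patch (fun=> 0) A (h - k) * 1
              + 1 * patch (fun=> 0) (B `\` A) (h - k).
  by rewrite !mulr1 mul1r -addrA -(patch0_setU_setD _ _ _ d0) addrC subrK.
have P1 := CP_continuous hP _ (@cst_continuous _ _ (1 : R)).
have Q1 := CP_continuous hQ _ (@cst_continuous _ _ (1 : R)).
apply: ring_joinD; first apply: ring_joinD; apply: ring_join_mul => //.
- exact: CP_continuous hP _ kc.
- apply: (CP_zero_off hP _ _ PA) => x nAx.
  by rewrite patchC; last exact: mem_set.
- apply: (CP_zero_off hQ _ _ QB) => x nBx; rewrite patchC //.
  by apply/mem_set => -[Bx _]; exact: nBx Bx.
Qed.

End IdealJoin.

Theorem theorem2p3 (R : realType) (X : topologicalType) :
  accessible_space X ->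
  open_C_embedded X R ->
  forall P Q : set (set X), closed_ideal P -> closed_ideal Q ->
  @CP X R (ideal_join P Q) = ring_join (@CP X R P) (@CP X R Q).
Proof.
move=> _ HC P Q hP hQ; apply/seteqP; split.
- exact: CP_ideal_join_sub_ring_join hP hQ HC.
- exact: ring_join_sub_CP_ideal_join hP hQ.
Qed.
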